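(* In the pool-based active learning setting, the utility function $f(S,\phi)=1-p_H(\mathcal{H}(\phi|_S))$ is worst-case submodular with respect to the induced prior $p(\phi)$; that is, for all partial realizations $\psi\subseteq\psi'$ (with positive probability) and every $e\in E\setminus\mathrm{dom}(\psi')$, $f_{wc}(e\mid\psi)\ge f_{wc}(e\mid\psi')$.
   Context: Pool-based active learning setting: $E$ is a finite set of data points and $O$ a finite set of labels. $\mathcal{H}$ is a finite set of hypotheses, each $h\in\mathcal{H}$ a function $h:E\to O$, with a prior probability distribution $p_H$ on $\mathcal{H}$; $p_H(\mathcal{H}')=\sum_{h\in\mathcal{H}'}p_H(h)$. Realizations are functions $\phi:E\to O$ with prior $p(\phi)=p_H(\{h\in\mathcal{H}:h=\phi\})$; $\Phi\sim p$. A partial realization is $\psi:S\to O$ with $\mathrm{dom}(\psi)=S\subseteq E$, identified with its set of pairs; $\psi\subseteq\psi'$ means $\psi'$ extends $\psi$; $\phi\sim\psi$ (or $h\sim\psi$) means agreement on $\mathrm{dom}(\psi)$; only $\psi$ with $\Pr[\Phi\sim\psi]>0$ are considered, and $p(\phi\mid\psi)=\Pr[\Phi=\phi\mid\Phi\sim\psi]$. The version space is $\mathcal{H}(\psi)=\{h\in\mathcal{H}:h\sim\psi\}$, and $\phi|_S$ denotes the restriction of $\phi$ to $S$. For $S\subseteq E$ and partial realization $\psi$, $f(S,\psi)=\mathbb{E}[f(S,\Phi)\mid\Phi\sim\psi]$. For $e\notin\mathrm{dom}(\psi)$, $O(e,\psi)=\{o\in O:\exists\phi,\ p(\phi\mid\psi)>0,\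 \phi(e)=o\}$ and $f_{wc}(e\mid\psi)=\min_{o\in O(e,\psi)}\{f(\mathrm{dom}(\psi)\cup\{e\},\psi\cup\{(e,o)\})-f(\mathrm{dom}(\psi),\psi)\}$. $f$ is worst-case submodular if $f_{wc}(e\mid\psi)\ge f_{wc}(e\mid\psi')$ for all $\psi\subseteq\psi'$ and all $e\in E\setminus\mathrm{dom}(\psi')$. *)

From mathcomp Require Import all_boot all_order all_algebra.
Set Implicit Arguments. Unset Strict Implicit. Unset Printing Implicit Defensive.
Import Order.TTheory GRing.Theory Num.Theory.
Local Open Scope ring_scope.

Section ActiveLearning.
Variables (R : realFieldType) (E O : finType).
Notation realization := {ffun E -> O}.
(* a partial realization psi : dom(psi) -> O, encoded as an option-valued map;
   dom(psi) = the points where it is not None *)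
Notation partial := {ffun E -> option O}.
Variables (H : {set realization}) (pH : realization -> R).

Definition pH_of (Hs : {set realization}) : R := \sum_(h in Hs) pH h.

Definition prior (phi : realization) : R := pH_of [set h in H | h == phi].

Definition dom (psi : partial) : {set E} := [set e | psi e != None].

Definition consistent (phi : realization) (psi : partial) : bool :=
  [forall e, (psi e == None) || (psi e == Some (phi e))].

Definition subreal (psi psi' : partial) : Prop :=
  forall e, psi e != None -> psi' e = psi e.

Definition prob_cons (psi : partial) : R :=
  \sum_(phi | consistent phi psi) prior phi.

Definition cond_prior (phi : realization) (psi : partial) : R :=
  (if consistent phi psi then prior phi else 0) / prob_cons psi.

Definition version_space (psi : partial) : {set realization} :=
  [set h in H | consistent h psi].

Definition restrict (phi : realization) (S : {set E}) : partial :=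
  [ffun e => if e \in S then Some (phi e) else None].

Definition util (S : {set E}) (phi : realization) : R :=
  1 - pH_of (version_space (restrict phi S)).

Definition util_exp (S : {set E}) (psi : partial) : R :=
  \sum_phi cond_prior phi psi * util S phi.

Definition outcomes (e : E) (psi : partial) : {set O} :=
  [set o | [exists phi, (0 < cond_prior phi psi) && (phi e == o)]].

Definition extend (psi : partial) (e : E) (o : O) : partial :=
  [ffun x => if x == e then Some o else psi x].

Definition gain (e : E) (psi : partial) (o : O) : R :=
  util_exp (dom (extend psi e o)) (extend psi e o) - util_exp (dom psi) psi.

(* f_wc(e | psi) = min_{o in O(e,psi)} gain; the seed of the min is an element
   of O(e,psi) itself (the value 0 for empty O(e,psi) is never used under the
   positivity hypothesis). *)
Definition fwc (e : E) (psi : partial) : R :=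
  if [pick o in outcomes e psi] is Some o0 then
    \big[Num.min/gain e psi o0]_(o in outcomes e psi) gain e psi o
  else 0.

End ActiveLearning.

From mathcomp Require Import all_boot all_order all_algebra.
From mathcomp Require Import ring.
Set Implicit Arguments. Unset Strict Implicit. Unset Printing Implicit Defensive.
Import Order.TTheory GRing.Theory Num.Theory.
Local Open Scope ring_scope.

(* Write [mass psi] for the prior weight pH(H(psi)) of the version space and
   [miss e psi o] for the weight of the hypotheses consistent with psi that
   disagree with the outcome o at e.  The proof has three parts.
   1. Expected utilities collapse: every realization of positive conditional
      probability is consistent with psi, so f(dom psi, psi) = 1 - mass psi,
      and for an observable outcome o the marginal gain of observing (e, o)
      is mass psi - mass (psi + (e,o)) = miss e psi o.
   2. Since o ranges over the observable outcomes only, f_wc(e | psi) is a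
      lower bound of miss e psi o for EVERY label o: an unobservable o has
      miss e psi o = mass psi, which dominates every miss e psi o'.
   3. miss e psi o is antitone in psi (extending psi shrinks the version
      space), so for o observable under psi,
        f_wc(e | psi') <= miss e psi' o <= miss e psi o = gain e psi o,
      and taking the minimum over o gives f_wc(e | psi') <= f_wc(e | psi). *)

Lemma ler_sum_subpred (R : numDomainType) (I : finType) (P Q : pred I)
    (F : I -> R) :
  (forall i, Q i -> 0 <= F i) -> (forall i, P i -> Q i) ->
  \sum_(i | P i) F i <= \sum_(i | Q i) F i.
Proof.
move=> F_ge0 PQ; rewrite [X in _ <= X](bigID P) /=.
have -> : \sum_(i | Q i && P i) F i = \sum_(i | P i) F i.
  by apply: eq_bigl => i; case Pi: (P i); rewrite ?andbT ?andbF ?PQ.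
by rewrite lerDl sumr_ge0 // => i /andP [Qi _]; apply: F_ge0.
Qed.

Section VersionSpace.
Variables (R : realFieldType) (E O : finType).
Variables (H : {set {ffun E -> O}}) (pH : {ffun E -> O} -> R).
Hypothesis pH_ge0 : forall h, h \in H -> 0 <= pH h.
Implicit Types (psi : {ffun E -> option O}) (phi h : {ffun E -> O}).
Implicit Types (e : E) (o : O).

Definition mass psi : R := \sum_(h in H | consistent h psi) pH h.

(* Weight of the hypotheses of H(psi) that disagree with the label o at e:
   the hypotheses eliminated by observing (e, o). *)
Definition miss e psi o : R :=
  \sum_(h in H | consistent h psi && (h e != o)) pH h.

Lemma priorE phi : prior H pH phi = if phi \in H then pH phi else 0.
Proof.
rewrite /prior /pH_of.
case: ifP => Hphi; last first.
  rewrite big1 // => h; rewrite inE => /andP [Hh /eqP hphi].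
  by rewrite -hphi Hh in Hphi.
rewrite (big_pred1 phi) // => h; rewrite !inE.
by case: (eqVneq h phi) => [->|]; rewrite ?Hphi ?andbF.
Qed.

Lemma prob_cons_mass psi : prob_cons H pH psi = mass psi.
Proof.
rewrite /prob_cons /mass big_mkcond [RHS]big_mkcond /=.
by apply: eq_bigr => phi _; rewrite priorE; case: (phi \in H); case: consistent.
Qed.

Lemma version_space_mass psi : pH_of pH (version_space H psi) = mass psi.
Proof. by apply: eq_bigl => h; rewrite inE. Qed.

Lemma mass_ge h psi : h \in H -> consistent h psi -> pH h <= mass psi.
Proof.
move=> Hh C; have -> : pH h = \sum_(i | i == h) pH i by rewrite big_pred1_eq.
apply: ler_sum_subpred => [i /andP [Hi _]|i /eqP ->]; [exact: pH_ge0|].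
by rewrite Hh C.
Qed.

Lemma restrict_dom phi psi : consistent phi psi -> restrict phi (dom psi) = psi.
Proof.
move/forallP => C; apply/ffunP => x; rewrite ffunE inE.
by case/orP: (C x) => /eqP ->.
Qed.

Lemma cond_prior_sum psi : 0 < prob_cons H pH psi ->
  \sum_phi cond_prior H pH phi psi = 1.
Proof.
move=> P0; rewrite /cond_prior -mulr_suml -big_mkcond /=.
by rewrite divff // gt_eqF.
Qed.

Lemma cond_prior_pos phi psi : 0 < prob_cons H pH psi ->
  0 < cond_prior H pH phi psi <->
  [/\ phi \in H, consistent phi psi & 0 < pH phi].
Proof.
move=> P0; rewrite /cond_prior priorE.
case: (phi \in H); case: (consistent phi psi);
  rewrite ?mul0r ?ltxx //= ?pmulr_lgt0 ?invr_gt0 //; by split => [|[]].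
Qed.

Lemma util_exp_dom psi : 0 < prob_cons H pH psi ->
  util_exp H pH (dom psi) psi = 1 - mass psi.
Proof.
move=> P0; transitivity (\sum_phi cond_prior H pH phi psi * (1 - mass psi)).
  apply: eq_bigr => phi _; rewrite /cond_prior.
  case C: (consistent phi psi); last by rewrite !mul0r.
  by rewrite /util restrict_dom // version_space_mass.
by rewrite -mulr_suml cond_prior_sum // mul1r.
Qed.

Lemma consistent_extend h psi e o : psi e = None ->
  consistent h (extend psi e o) = consistent h psi && (h e == o).
Proof.
move=> psi_e; apply/forallP/andP.
- move=> C; split.
  + apply/forallP => x; have := C x; rewrite ffunE.
    by case: (eqVneq x e) => [->|//]; rewrite psi_e.
  + by have := C e; rewrite ffunE eqxx /= => /eqP [->].
- case=> /forallP C /eqP <- x; rewrite ffunE.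
  by case: (eqVneq x e) => [->|_]; [rewrite eqxx orbT | exact: C].
Qed.

Lemma mass_extend psi e o : psi e = None ->
  mass psi = mass (extend psi e o) + miss e psi o.
Proof.
move=> psi_e; rewrite /mass /miss (bigID (fun h => h e == o)) /=.
congr (_ + _); apply: eq_bigl => h; first by rewrite consistent_extend ?andbA.
by rewrite andbA.
Qed.

Lemma outcomesP psi e o : 0 < prob_cons H pH psi ->
  reflect (exists h, [/\ h \in H, consistent h psi, 0 < pH h & h e = o])
          (o \in outcomes H pH e psi).
Proof.
move=> P0; rewrite inE; apply: (iffP existsP).
- move=> [h /andP [/(cond_prior_pos h P0) [Hh C pos] /eqP he]].
  by exists h.
- move=> [h [Hh C pos he]]; exists h; rewrite he eqxx andbT.
  by apply/(cond_prior_pos h P0).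
Qed.

Lemma outcomes_nonempty psi e : 0 < prob_cons H pH psi ->
  exists o, o \in outcomes H pH e psi.
Proof.
move=> P0; have mass_neq0 : mass psi <> 0.
  by move=> m0; move: P0; rewrite prob_cons_mass m0 ltxx.
have [h /andP [/andP [Hh C] pos]] :=
  psumr_neq0P (fun h (hHC : (h \in H) && _) => pH_ge0 (proj1 (andP hHC)))
              mass_neq0.
by exists (h e); apply/outcomesP => //; exists h.
Qed.

Lemma gain_miss psi e o : 0 < prob_cons H pH psi -> psi e = None ->
  o \in outcomes H pH e psi -> gain H pH e psi o = miss e psi o.
Proof.
move=> P0 psi_e /outcomesP-/(_ P0) [h [Hh C pos he]].
have P1 : 0 < prob_cons H pH (extend psi e o).
  rewrite prob_cons_mass; apply: lt_le_trans pos (mass_ge Hh _).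
  by rewrite consistent_extend // C he eqxx.
rewrite /gain !util_exp_dom // (mass_extend o psi_e).
by ring.
Qed.

Lemma miss_unobservable psi e o : 0 < prob_cons H pH psi -> psi e = None ->
  o \notin outcomes H pH e psi -> miss e psi o = mass psi.
Proof.
move=> P0 psi_e unobs; rewrite (mass_extend o psi_e) /mass big1 ?add0r // => h.
rewrite consistent_extend // => /andP [Hh /andP [C /eqP he]].
apply/eqP; rewrite eq_le pH_ge0 // andbT leNgt; apply: contra unobs => pos.
by apply/outcomesP => //; exists h.
Qed.

Lemma miss_le_mass psi e o : miss e psi o <= mass psi.
Proof.
apply: ler_sum_subpred => [h /andP [Hh _]|h /and3P [-> -> _] //].
exact: pH_ge0.
Qed.

Lemma consistent_subreal h psi psi' :
  subreal psi psi' -> consistent h psi' -> consistent h psi.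
Proof.
move=> sub /forallP C; apply/forallP => x.
case: (eqVneq (psi x) None) => [->//|N].
by move: (C x); rewrite (sub x N) (negbTE N).
Qed.

Lemma miss_antitone psi psi' e o :
  subreal psi psi' -> miss e psi' o <= miss e psi o.
Proof.
move=> sub; apply: ler_sum_subpred => [h /andP [Hh _]|h]; first exact: pH_ge0.
by case/and3P=> Hh /(consistent_subreal sub) C ne; rewrite Hh C.
Qed.

Lemma fwc_le_gain psi e o :
  o \in outcomes H pH e psi -> fwc H pH e psi <= gain H pH e psi o.
Proof.
move=> obs; rewrite /fwc; case: pickP => [o0 _|/(_ o)]; last by rewrite obs.
exact: bigmin_le_cond.
Qed.

Lemma fwc_geP psi e (m : R) : 0 < prob_cons H pH psi ->
  (forall o, o \in outcomes H pH e psi -> m <= gain H pH e psi o) ->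
  m <= fwc H pH e psi.
Proof.
move=> P0 m_le; rewrite /fwc; case: pickP => [o0 obs0|none].
  by apply/bigmin_geP; split; [exact: m_le | exact: m_le].
by have [o] := outcomes_nonempty e P0; rewrite none.
Qed.

Lemma fwc_le_miss psi e o : 0 < prob_cons H pH psi -> psi e = None ->
  fwc H pH e psi <= miss e psi o.
Proof.
move=> P0 psi_e.
have [obs|unobs] := boolP (o \in outcomes H pH e psi).
  by rewrite -gain_miss // fwc_le_gain.
have [o' obs'] := outcomes_nonempty e P0.
rewrite miss_unobservable // (le_trans (fwc_le_gain obs')) //.
by rewrite gain_miss // miss_le_mass.
Qed.

End VersionSpace.

Theorem proposition1 (R : realFieldType) (E O : finType)
  (H : {set {ffun E -> O}}) (pH : {ffun E -> O} -> R) :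
  (forall h, h \in H -> 0 <= pH h) ->
  \sum_(h in H) pH h = 1 ->
  forall (psi psi' : {ffun E -> option O}) (e : E),
    0 < prob_cons H pH psi ->
    0 < prob_cons H pH psi' ->
    subreal psi psi' ->
    e \notin dom psi' ->
    fwc H pH e psi' <= fwc H pH e psi.
Proof.
move=> pH_ge0 _ psi psi' e P0 P1 sub e_new.
have psi'_e : psi' e = None by move: e_new; rewrite inE negbK => /eqP.
have psi_e : psi e = None.
  by case: (psi e) (sub e) => [o /(_ isT)|//]; rewrite psi'_e.
apply: fwc_geP => // o obs.
rewrite gain_miss //.
exact: le_trans (fwc_le_miss pH_ge0 o P1 psi'_e) (miss_antitone _ _ _ sub).
Qed.
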